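(* Let $q \geq 1$ and let $k$ be a positive integer with $k < n$. Let $\boldsymbol{B}$ be a dictionary as described in the context, and assume that every signal $\boldsymbol{y}\in\mathbb{R}^D$ that admits a $k$-block-sparse representation admits a unique one. If $$\Big(k\sqrt{\frac{1+\sigma_q}{1+\epsilon_q}} + k - 1\Big)\mu_S < \frac{1-\epsilon_q}{1+\epsilon_q},$$ then for every $\Lambda_k\subseteq\{1,\dots,n\}$ with $|\Lambda_k|=k$ and every $\boldsymbol{y}\in\bigoplus_{i\in\Lambda_k}\mathcal{S}_i$, every optimal solution $\boldsymbol{c}^*$ of $P_{\ell_q/\ell_1}(\boldsymbol{y})$ satisfies $\boldsymbol{c}^*[i]=\boldsymbol{0}$ for all $i\notin\Lambda_k$; i.e. the solution of $P_{\ell_q/\ell_1}$ is equivalent to that of $P_{\ell_q/\ell_0}$.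
   Context: $\boldsymbol{B} = [\boldsymbol{B}[1]\ \cdots\ \boldsymbol{B}[n]] \in \mathbb{R}^{D\times N}$ has unit-Euclidean-norm columns, blocks $\boldsymbol{B}[i] \in \mathbb{R}^{D\times m_i}$ (possibly with linearly dependent columns); $\mathcal{S}_i = \operatorname{span}(\boldsymbol{B}[i])$ has dimension $d_i$, and $\mathcal{S}_i\cap\mathcal{S}_j = \{0\}$ for $i\ne j$. Vectors $\boldsymbol{c}\in\mathbb{R}^N$ are written $(\boldsymbol{c}[1];\dots;\boldsymbol{c}[n])$, $\boldsymbol{c}[i]\in\mathbb{R}^{m_i}$. A $k$-block-sparse representation of $\boldsymbol{y}$ is $\boldsymbol{y}=\sum_{i\in\Lambda}\boldsymbol{s}_i$ with $|\Lambda|\le k$, $\boldsymbol{s}_i\in\mathcal{S}_i\setminus\{0\}$; uniqueness means any two have the same $\Lambda$ and the same $\boldsymbol{s}_i$. $P_{\ell_q/\ell_1}(\boldsymbol{y})$: $\min \sum_i \|\boldsymbol{c}[i]\|_q$ s.t. $\boldsymbol{y}=\boldsymbol{B}\boldsymbol{c}$; $P_{\ell_q/\ell_0}(\boldsymbol{y})$: minimize the number of nonzero blocks $\boldsymbol{c}[i]$ s.t. $\boldsymbol{y}=\boldsymbol{B}\boldsymbol{c}$. Subspace coherence: $\mu(\mathcal{S}_i,\mathcal{S}_j)=\max_{0\ne\boldsymbol{x}\in\mathcal{S}_i,\,0\ne\boldsymbol{z}\in\mathcal{S}_j}\frac{|\boldsymbol{x}^\top\boldsymbol{z}|}{\|\boldsymbol{x}\|_2\|\boldsymbol{z}\|_2}$;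 mutual subspace coherence $\mu_S=\max_{i\ne j}\mu(\mathcal{S}_i,\mathcal{S}_j)$. $\epsilon_q$: the smallest constant such that for every $i$ there is a full column-rank submatrix $\bar{\boldsymbol{B}}[i]\in\mathbb{R}^{D\times d_i}$ of $\boldsymbol{B}[i]$ with $(1-\epsilon_q)\|\bar{\boldsymbol{c}}\|_q^2 \le \|\bar{\boldsymbol{B}}[i]\bar{\boldsymbol{c}}\|_2^2 \le (1+\epsilon_q)\|\bar{\boldsymbol{c}}\|_q^2$ for all $\bar{\boldsymbol{c}}\in\mathbb{R}^{d_i}$. $\sigma_q$: the smallest constant such that $\|\boldsymbol{B}[i]\boldsymbol{c}[i]\|_2^2\le(1+\sigma_q)\|\boldsymbol{c}[i]\|_q^2$ for all $i$ and all $\boldsymbol{c}[i]$. *)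

From HB Require Import structures.
From mathcomp Require Import all_boot all_order all_algebra.
From mathcomp Require Import boolp classical_sets reals exp.
Set Implicit Arguments. Unset Strict Implicit. Unset Printing Implicit Defensive.
Import Order.TTheory GRing.Theory Num.Theory.
Local Open Scope ring_scope.
Local Open Scope classical_set_scope.

Definition normq (R : realType) (p : nat) (q : R) (c : 'cV[R]_p) : R :=
  (\sum_(j < p) `|c j 0| `^ q) `^ q^-1.

Definition norm2 (R : realType) (p : nat) (c : 'cV[R]_p) : R :=
  Num.sqrt (\sum_(j < p) c j 0 ^+ 2).

Definition inSpan (R : realType) (D p : nat) (A : 'M[R]_(D, p)) (x : 'cV[R]_D) : Prop :=
  exists c : 'cV[R]_p, x = A *m c.

Definition coherence (R : realType) (D p1 p2 : nat)
    (A1 : 'M[R]_(D, p1)) (A2 : 'M[R]_(D, p2)) : R :=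
  sup [set t : R | exists (x z : 'cV[R]_D), [/\ inSpan A1 x, x != 0, inSpan A2 z, z != 0 &
        t = `|\sum_(r < D) x r 0 * z r 0| / (norm2 x * norm2 z)]].

Definition mu_S (R : realType) (D n : nat) (m : 'I_n -> nat)
    (B : forall i : 'I_n, 'M[R]_(D, m i)) : R :=
  \big[Num.max/0]_(i < n) \big[Num.max/0]_(j < n | j != i) coherence (B i) (B j).

(* epsilon_q: smallest constant such that every block has a full column-rank
   d_i-column submatrix satisfying the two-sided bound (d_i = dim S_i = rank B[i]) *)
Definition eps_q (R : realType) (D n : nat) (m : 'I_n -> nat)
    (B : forall i : 'I_n, 'M[R]_(D, m i)) (q : R) : R :=
  inf [set e : R | forall i : 'I_n, exists f : 'I_(\rank (B i)) -> 'I_(m i),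
        \rank (colsub f (B i)) = \rank (B i) /\
        forall cb : 'cV[R]_(\rank (B i)),
          (1 - e) * normq q cb ^+ 2 <= norm2 (colsub f (B i) *m cb) ^+ 2 /\
          norm2 (colsub f (B i) *m cb) ^+ 2 <= (1 + e) * normq q cb ^+ 2].

Definition sigma_q (R : realType) (D n : nat) (m : 'I_n -> nat)
    (B : forall i : 'I_n, 'M[R]_(D, m i)) (q : R) : R :=
  inf [set s : R | forall (i : 'I_n) (c : 'cV[R]_(m i)),
        norm2 (B i *m c) ^+ 2 <= (1 + s) * normq q (c) ^+ 2].

Definition Bmul (R : realType) (D n : nat) (m : 'I_n -> nat)
    (B : forall i : 'I_n, 'M[R]_(D, m i)) (c : forall i : 'I_n, 'cV[R]_(m i)) : 'cV[R]_D :=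
  \sum_(i < n) B i *m c i.

Definition kbs_rep (R : realType) (D n : nat) (m : 'I_n -> nat)
    (B : forall i : 'I_n, 'M[R]_(D, m i)) (k : nat) (y : 'cV[R]_D)
    (L : {set 'I_n}) (s : 'I_n -> 'cV[R]_D) : Prop :=
  [/\ (#|L| <= k)%N,
      (forall i, i \in L -> inSpan (B i) (s i) /\ s i != 0) &
      y = \sum_(i in L) s i].

Definition unique_kbs (R : realType) (D n : nat) (m : 'I_n -> nat)
    (B : forall i : 'I_n, 'M[R]_(D, m i)) (k : nat) : Prop :=
  forall (y : 'cV[R]_D) (L L' : {set 'I_n}) (s s' : 'I_n -> 'cV[R]_D),
    kbs_rep B k y L s -> kbs_rep B k y L' s' ->
    L = L' /\ (forall i, i \in L -> s i = s' i).

Definition in_block_sum (R : realType) (D n : nat) (m : 'I_n -> nat)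
    (B : forall i : 'I_n, 'M[R]_(D, m i)) (L : {set 'I_n}) (y : 'cV[R]_D) : Prop :=
  exists s : 'I_n -> 'cV[R]_D,
    (forall i, i \in L -> inSpan (B i) (s i)) /\ y = \sum_(i in L) s i.

Definition lq_l1_optimal (R : realType) (D n : nat) (m : 'I_n -> nat)
    (B : forall i : 'I_n, 'M[R]_(D, m i)) (q : R) (y : 'cV[R]_D)
    (c : forall i : 'I_n, 'cV[R]_(m i)) : Prop :=
  y = Bmul B c /\
  forall c' : forall i : 'I_n, 'cV[R]_(m i), y = Bmul B c' ->
    \sum_(i < n) normq q (c i) <= \sum_(i < n) normq q (c' i).

(* Suppose an optimal [c] has a nonzero block [c i0] outside [L], and write
   [y = sum_(i in L) s_i].  The residuals [t_i = s_i - B[i] c[i]], [i in L], lie in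
   the subspaces S_i and add up to [sum_(j notin L) B[j] c[j]].  Expanding each
   [t_i] in the columns of [B[i]] with coefficients [ch_i] controlled by eps_q and
   moving the off-support mass onto [L], optimality and the triangle inequality
   give [sum_(j notin L) |c[j]|_q <= sum_(i in L) |ch_i|_q].  Computing
   [|sum_i t_i|^2] and bounding all cross terms by mu_S, from below via the lower
   eps_q bound and from above via sigma_q, then yields
   [(1 - eps)/(1 + eps) <= (k sqrt((1 + sigma)/(1 + eps)) + k - 1) mu_S],
   contradicting the hypothesis.  The infima eps_q and sigma_q are attained since
   their defining conditions are closed and involve finitely many column
   choices. *)

From Pilot Require Import Defs.
From HB Require Import structures.
From mathcomp Require Import all_boot all_order all_algebra.
From mathcomp Require Import boolp classical_sets reals exp.
From mathcomp Require Import ereal sequences measure lebesgue_measure.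
From mathcomp Require Import lebesgue_integral hoelder.
From mathcomp Require Import ring lra.
Import Order.TTheory GRing.Theory Num.Theory.
Local Open Scope ring_scope.
Local Open Scope classical_set_scope.

(* [rat] also exports a [normq]. *)
Local Notation normq := Defs.normq.

Set Implicit Arguments.
Unset Strict Implicit.
Unset Printing Implicit Defensive.

Section Norms.
Variable R : realType.
Implicit Types (q : R) (p D : nat).

Lemma sqr_sum_mul_le (I : finType) (P : pred I) (a b : I -> R) :
  (\sum_(i | P i) a i * b i) ^+ 2 <=
  (\sum_(i | P i) a i ^+ 2) * (\sum_(i | P i) b i ^+ 2).
Proof.
set Sa := \sum_(i | P i) a i ^+ 2; set Sb := \sum_(i | P i) b i ^+ 2.
set Sab := \sum_(i | P i) a i * b i.
have lagrange : \sum_(i | P i) \sum_(j | P j) (a i * b j - a j * b i) ^+ 2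
    = 2 * (Sa * Sb - Sab ^+ 2).
  have double_sum (F : I -> R) (G : I -> R) :
      \sum_(i | P i) \sum_(j | P j) F i * G j
      = (\sum_(i | P i) F i) * (\sum_(j | P j) G j).
    by rewrite mulr_suml; apply: eq_bigr => i _; rewrite mulr_sumr.
  transitivity (\sum_(i | P i) \sum_(j | P j) (a i ^+ 2 * b j ^+ 2)
     + \sum_(i | P i) \sum_(j | P j) (b i ^+ 2 * a j ^+ 2)
     - 2 * \sum_(i | P i) \sum_(j | P j) ((a i * b i) * (a j * b j))).
    rewrite mulr_sumr -big_split -sumrB /=; apply: eq_bigr => i _.
    by rewrite mulr_sumr -big_split -sumrB /=; apply: eq_bigr => j _; ring.
  by rewrite !double_sum -/Sa -/Sb -/Sab; ring.
have : 0 <= \sum_(i | P i) \sum_(j | P j) (a i * b j - a j * b i) ^+ 2.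
  by apply: sumr_ge0 => i _; apply: sumr_ge0 => j _; apply: sqr_ge0.
rewrite lagrange; nra.
Qed.

Lemma normq_ge0 p q (c : 'cV[R]_p) : 0 <= normq q c.
Proof. exact: powR_ge0. Qed.

Lemma normq0 p q : 0 < q -> normq q (0 : 'cV[R]_p) = 0.
Proof.
move=> q0; rewrite /normq big1 ?powR0 ?invr_eq0 ?gt_eqF //.
by move=> j _; rewrite mxE normr0 powR0 // gt_eqF.
Qed.

Lemma normq_gt0 p q (c : 'cV[R]_p) : 0 < q -> c != 0 -> 0 < normq q c.
Proof.
move=> q0 c0; rewrite lt_def normq_ge0 andbT; apply: contra c0.
move=> /eqP/powR_eq0_eq0/eqP; rewrite psumr_eq0 => [/allP c_eq0|j _]; last first.
  exact: powR_ge0.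
apply/eqP/matrixP => j l; rewrite ord1 mxE.
by have /= := c_eq0 j (mem_index_enum j); rewrite powR_eq0 normr_eq0 => /andP[/eqP].
Qed.

Lemma normq_delta p q (j : 'I_p) : 0 < q -> normq q (delta_mx j 0) = 1.
Proof.
move=> q0; rewrite /normq (bigD1 j) //= mxE !eqxx normr1 powR1 big1 ?addr0 ?powR1 //.
by move=> l /negbTE; rewrite mxE => ->; rewrite normr0 powR0 // gt_eqF.
Qed.

Lemma coord_le_normq p q (c : 'cV[R]_p) j : 0 < q -> `|c j 0| <= normq q c.
Proof.
move=> q0; have -> : `|c j 0| = (`|c j 0| `^ q) `^ q^-1.
  by rewrite -powRrM mulfV ?gt_eqF // powRr1.
apply: ge0_ler_powR; rewrite ?invr_ge0 ?(ltW q0) ?nnegrE ?powR_ge0 //.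
  by apply: sumr_ge0 => *; exact: powR_ge0.
by rewrite (bigD1 j) //= lerDl; apply: sumr_ge0 => *; exact: powR_ge0.
Qed.

(* A column vector seen as a finitely supported sequence, to apply Minkowski's
   inequality for the counting measure on [nat]. *)
Definition seq_of_col p (w : 'cV[R]_p) : nat -> R :=
  fun k => if insub k : option 'I_p is Some i then w i 0 else 0.

Lemma Lnorm_seq_of_col p q (w : 'cV[R]_p) : 0 < q ->
  Lnorm (@counting nat R) q%:E (EFin \o seq_of_col w) = (normq q w)%:E.
Proof.
move=> q0; rewrite Lnorm_counting//.
rewrite (nneseries_split 0 p); last by move=> k; rewrite lee_fin powR_ge0.
rewrite add0n ereal_series_cond eseries0 ?adde0; last first.
  move=> k _ /andP[kp _]; rewrite /seq_of_col /= insubF /=; last by rewrite ltnNge kp.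
  by rewrite normr0 powR0 // gt_eqF.
rewrite big_mkord sumEFin poweR_EFin /normq; congr (_ `^ _)%:E.
by apply: eq_bigr => i _ /=; rewrite /seq_of_col valK.
Qed.

Lemma normqD p q (u v : 'cV[R]_p) : 1 <= q ->
  normq q (u + v) <= normq q u + normq q v.
Proof.
move=> q1; have q0 : 0 < q by rewrite (lt_le_trans _ q1).
have mu : measurable_fun setT (seq_of_col u) by [].
have mv : measurable_fun setT (seq_of_col v) by [].
have := minkowski_EFin (@counting nat R) mu mv q1.
have -> : (seq_of_col u \+ seq_of_col v)%R = seq_of_col (u + v).
  by apply/funext => k; rewrite /seq_of_col /=; case: insub => [i|]; rewrite ?mxE ?addr0.
by rewrite !Lnorm_seq_of_col // -EFinD lee_fin.
Qed.

Definition dot D (x z : 'cV[R]_D) : R := \sum_(r < D) x r 0 * z r 0.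

Lemma norm2_ge0 D (x : 'cV[R]_D) : 0 <= norm2 x.
Proof. exact: sqrtr_ge0. Qed.

Lemma norm2_sqr D (x : 'cV[R]_D) : norm2 x ^+ 2 = dot x x.
Proof.
rewrite /norm2 sqr_sqrtr; last by apply: sumr_ge0 => *; exact: sqr_ge0.
by apply: eq_bigr => r _; rewrite expr2.
Qed.

Lemma norm2_0 D : norm2 (0 : 'cV[R]_D) = 0.
Proof. by rewrite /norm2 big1 ?sqrtr0 // => r _; rewrite mxE expr0n. Qed.

Lemma norm2_gt0 D (x : 'cV[R]_D) : x != 0 -> 0 < norm2 x.
Proof.
move=> x0; rewrite /norm2 sqrtr_gt0 lt_def sumr_ge0 ?andbT; last first.
  by move=> *; exact: sqr_ge0.
apply: contra x0; rewrite psumr_eq0 => [/allP x_eq0|r _]; last exact: sqr_ge0.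
apply/eqP/matrixP => r l; rewrite ord1 mxE.
by have /= := x_eq0 r (mem_index_enum r); rewrite sqrf_eq0 => /eqP.
Qed.

Lemma norm2_col D p (A : 'M[R]_(D, p)) j :
  \sum_(r < D) A r j ^+ 2 = 1 -> norm2 (A *m delta_mx j 0) = 1.
Proof.
move=> Aj; rewrite -colE /norm2 -[X in _ = X]sqrtr1 -Aj; congr Num.sqrt.
by apply: eq_bigr => r _; rewrite mxE.
Qed.

Lemma dotC D (x z : 'cV[R]_D) : dot x z = dot z x.
Proof. by apply: eq_bigr => r _; rewrite mulrC. Qed.

Lemma dot_suml D (I : finType) (P : pred I) (x : I -> 'cV[R]_D) z :
  dot (\sum_(i | P i) x i) z = \sum_(i | P i) dot (x i) z.
Proof.
rewrite /dot exchange_big /=; apply: eq_bigr => r _.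
by rewrite summxE mulr_suml.
Qed.

Lemma dot_sumr D (I : finType) (P : pred I) (x : I -> 'cV[R]_D) z :
  dot z (\sum_(i | P i) x i) = \sum_(i | P i) dot z (x i).
Proof. by rewrite dotC dot_suml; apply: eq_bigr => i _; rewrite dotC. Qed.

Lemma dot_le_norm2 D (x z : 'cV[R]_D) : `|dot x z| <= norm2 x * norm2 z.
Proof.
have := sqr_sum_mul_le xpredT (fun r => x r 0) (fun r => z r 0).
have -> : (\sum_(r < D) x r 0 ^+ 2) * (\sum_(r < D) z r 0 ^+ 2)
    = (norm2 x * norm2 z) ^+ 2.
  by rewrite exprMn /norm2 !sqr_sqrtr // sumr_ge0 // => *; exact: sqr_ge0.
rewrite -/(dot x z) => cs.
have nxz := mulr_ge0 (norm2_ge0 x) (norm2_ge0 z).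
rewrite ler_norml; apply/andP; split; nra.
Qed.

Lemma norm2_mulmx_le D p q (A : 'M[R]_(D, p)) (c : 'cV[R]_p) : 0 < q ->
  (forall j, \sum_(r < D) A r j ^+ 2 = 1) ->
  norm2 (A *m c) ^+ 2 <= p%:R ^+ 2 * normq q c ^+ 2.
Proof.
move=> q0 A_unit.
have rows_cs : norm2 (A *m c) ^+ 2
    <= \sum_(r < D) (\sum_(j < p) A r j ^+ 2) * (\sum_(j < p) c j 0 ^+ 2).
  rewrite /norm2 sqr_sqrtr; last by apply: sumr_ge0 => *; exact: sqr_ge0.
  by apply: ler_sum => r _; rewrite mxE; exact: sqr_sum_mul_le.
have rows_unit : \sum_(r < D) (\sum_(j < p) A r j ^+ 2) * (\sum_(j < p) c j 0 ^+ 2)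
    = p%:R * (\sum_(j < p) c j 0 ^+ 2).
  by rewrite -mulr_suml exchange_big /= (eq_bigr (fun=> 1)) // sumr_const card_ord.
have coords : \sum_(j < p) c j 0 ^+ 2 <= p%:R * normq q c ^+ 2.
  rewrite mulr_natl -[p in _ *+ p]card_ord -sumr_const; apply: ler_sum => j _.
  rewrite -real_normK ?num_real //.
  by apply: lerXn2r; rewrite ?nnegrE ?normr_ge0 ?normq_ge0 ?coord_le_normq.
by apply: (le_trans rows_cs); rewrite rows_unit expr2 -mulrA ler_wpM2l.
Qed.

Lemma dot_le_coherence D p1 p2 (A1 : 'M[R]_(D, p1)) (A2 : 'M[R]_(D, p2)) x z :
  inSpan A1 x -> inSpan A2 z ->
  `|dot x z| <= coherence A1 A2 * norm2 x * norm2 z.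
Proof.
move=> x1 z2; have [->|x0] := eqVneq x 0.
  by rewrite norm2_0 mulr0 mul0r /dot big1 ?normr0 // => r _; rewrite mxE mul0r.
have [->|z0] := eqVneq z 0.
  by rewrite norm2_0 mulr0 /dot big1 ?normr0 // => r _; rewrite mxE mulr0.
have nxz : 0 < norm2 x * norm2 z by rewrite mulr_gt0 ?norm2_gt0.
rewrite -mulrA -ler_pdivrMr //; apply: ub_le_sup; last by exists x, z; split.
exists 1 => _ [x' [z' [_ x'0 _ z'0 ->]]].
by rewrite ler_pdivrMr ?mulr_gt0 ?norm2_gt0 // mul1r; exact: dot_le_norm2.
Qed.

Lemma dot_le_mu_S D n (m : 'I_n -> nat) (B : forall i : 'I_n, 'M[R]_(D, m i))
    i j x z :
  i != j -> inSpan (B i) x -> inSpan (B j) z ->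
  `|dot x z| <= mu_S B * norm2 x * norm2 z.
Proof.
move=> ij xi zj; apply: (le_trans (dot_le_coherence xi zj)).
rewrite -!mulrA ler_wpM2r ?mulr_ge0 ?norm2_ge0 //.
apply: le_trans (le_bigmax _ _ i).
by apply: le_bigmax_cond; rewrite eq_sym.
Qed.

End Norms.

Section Columns.
Variable F : fieldType.

Lemma colsub_full_rank_inj D m r (A : 'M[F]_(D, m)) (f : 'I_r -> 'I_m) :
  \rank (colsub f A) = r -> injective f.
Proof.
move=> rk j1 j2 fj; have free : row_free (colsub f A)^T by rewrite /row_free mxrank_tr rk.
have : row j1 (colsub f A)^T = row j2 (colsub f A)^T.
  by apply/matrixP => i k; rewrite !mxE fj.
rewrite !rowE => /(row_free_inj free)/matrixP/(_ 0 j1); rewrite !mxE !eqxx /=.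
by case: eqP => // _ /eqP; rewrite oner_eq0.
Qed.

Lemma exists_full_rank_colsub D m (A : 'M[F]_(D, m)) :
  exists f : 'I_(\rank A) -> 'I_m, \rank (colsub f A) = \rank A.
Proof.
pose g := cast_ord (esym (mxrank_tr A)).
exists (fun j => maxrankfun A^T (g j)).
rewrite -mxrank_tr trmx_mxsub.
rewrite (eqmx_rowsub_comp _ _ _ (@cast_ord_inj _ _ _)) ?mxrank_tr //.
by rewrite (eq_maxrowsub A^T) mxrank_tr.
Qed.

Lemma colsub_span D m r (A : 'M[F]_(D, m)) (f : 'I_r -> 'I_m) (c : 'cV[F]_m) :
  \rank (colsub f A) = \rank A -> exists cb, A *m c = colsub f A *m cb.
Proof.
move=> rk; have sub : ((colsub f A)^T <= A^T)%MS by rewrite trmx_mxsub rowsub_sub.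
have sup : (A^T <= (colsub f A)^T)%MS.
  by have [_ <-] := mxrank_leqif_sup sub; rewrite !mxrank_tr rk.
have /submxP[v cv] : ((A *m c)^T <= (colsub f A)^T)%MS.
  by rewrite trmx_mul; apply: submx_trans sup; exact: submxMl.
by exists v^T; rewrite -[A *m c]trmxK cv trmx_mul trmxK.
Qed.

End Columns.

Section Padding.
Variable R : realType.

Lemma sum_mul_delta (I : finType) (F : I -> R) (j : I) :
  \sum_l F l * (l == j)%:R = F j.
Proof.
rewrite (bigD1 j) //= eqxx mulr1 big1 ?addr0 // => l /negbTE ->; exact: mulr0.
Qed.

Definition pad_col r m (f : 'I_r -> 'I_m) (cb : 'cV[R]_r) : 'cV[R]_m :=
  \col_l \sum_(j < r) (f j == l)%:R * cb j 0.

Lemma mulmx_pad_col D r m (A : 'M[R]_(D, m)) (f : 'I_r -> 'I_m) cb :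
  A *m pad_col f cb = colsub f A *m cb.
Proof.
apply/matrixP => i k; rewrite ord1 !mxE.
under eq_bigr do rewrite mxE mulr_sumr.
rewrite exchange_big /=; apply: eq_bigr => j _; rewrite mxE.
rewrite -[RHS](sum_mul_delta (fun l => A i l * cb j 0) (f j)).
by apply: eq_bigr => l _; rewrite eq_sym; ring.
Qed.

Lemma normq_pad_col r m q (f : 'I_r -> 'I_m) cb : 0 < q -> injective f ->
  normq q (pad_col f cb) = normq q cb.
Proof.
move=> q0 f_inj; rewrite /Defs.normq; congr (_ `^ _).
have entry l : `|pad_col f cb l 0| `^ q = \sum_(j < r) (f j == l)%:R * `|cb j 0| `^ q.
  rewrite mxE; case: (pickP (fun j => f j == l)) => [j /eqP <-|no_j].
    have sum_f (X : 'I_r -> R) : \sum_(j' < r) (f j' == f j)%:R * X j' = X j.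
      by rewrite -[RHS](sum_mul_delta X j); apply: eq_bigr => j' _; rewrite (inj_eq f_inj) mulrC.
    by rewrite !sum_f.
  by rewrite !big1 ?normr0 ?powR0 ?gt_eqF // => j _; rewrite no_j mul0r.
under eq_bigr do rewrite entry.
rewrite exchange_big /=; apply: eq_bigr => j _.
rewrite -[RHS](sum_mul_delta (fun _ => `|cb j 0| `^ q) (f j)).
by apply: eq_bigr => l _; rewrite mulrC eq_sym.
Qed.

End Padding.

Section Infimum.
Variable R : realType.
Implicit Types (P : R -> Prop) (a b c e : R).

Definition up_closed P := forall e e', e <= e' -> P e -> P e'.

Definition right_closed P := forall e, (forall e', e < e' -> P e') -> P e.

Lemma inf_closed (E : set R) P :
  E !=set0 -> E `<=` P -> up_closed P -> right_closed P -> P (inf E).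
Proof.
move=> E0 EP up rc; apply: rc => e' /(inf_lt E0)[x Ex xe'].
exact: up (ltW xe') (EP _ Ex).
Qed.

Lemma right_closed_exists (T : finType) (P : T -> R -> Prop) :
  (forall x, up_closed (P x)) -> (forall x, right_closed (P x)) ->
  right_closed (fun e => exists x, P x e).
Proof.
move=> up rc e ex; apply: contrapT => no_x.
have escape x : exists e', e < e' /\ ~ P x e'.
  apply: contrapT => all_P; apply: no_x; exists x.
  apply: rc => e' ee'; apply: contrapT => nP; apply: all_P; exists e'.
  by split.
have [g gP] := choice escape.
have [|x Px] := ex (\big[Num.min/e + 1]_x g x).
  by apply: lt_bigmin => [|x _]; [rewrite ltrDl | exact: (gP x).1].
by apply: (gP x).2; apply: up Px; exact: bigmin_le.
Qed.

Lemma right_closed_le_affine a b c : 0 <= b -> right_closed (fun e => a <= c + e * b).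
Proof.
move=> b0 e le_a; apply/ler_addgt0Pr => d d0.
have b1 : 0 < b + 1 by lra.
have := le_a (e + d / (b + 1)); rewrite ltrDl divr_gt0 // => /(_ isT).
move/le_trans; apply; rewrite mulrDl addrA lerD2l.
by rewrite mulrAC ler_pdivrMr // ler_wpM2l ?(ltW d0) // lerDl.
Qed.

End Infimum.

Section BlockConstants.
Variable R : realType.
Implicit Types (q e : R).

Definition block_upper D m (A : 'M[R]_(D, m)) q e : Prop :=
  forall c : 'cV[R]_m, norm2 (A *m c) ^+ 2 <= (1 + e) * normq q c ^+ 2.

Lemma block_upper_up_closed D m (A : 'M[R]_(D, m)) q : up_closed (block_upper A q).
Proof.
move=> e e' ee' Ae c; apply: le_trans (Ae c) _.
by apply: ler_wpM2r; [exact: sqr_ge0 | rewrite lerD2l].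
Qed.

Lemma block_upper_right_closed D m (A : 'M[R]_(D, m)) q :
  right_closed (block_upper A q).
Proof.
move=> e Ae c; rewrite mulrDl mul1r.
apply: (right_closed_le_affine (sqr_ge0 _)) => e' ee'.
by have := Ae e' ee' c; rewrite mulrDl mul1r.
Qed.

Definition rip_colsub D m r (A : 'M[R]_(D, m)) q (f : 'I_r -> 'I_m) e : Prop :=
  \rank (colsub f A) = \rank A /\
  forall cb : 'cV[R]_r,
    (1 - e) * normq q cb ^+ 2 <= norm2 (colsub f A *m cb) ^+ 2 /\
    norm2 (colsub f A *m cb) ^+ 2 <= (1 + e) * normq q cb ^+ 2.

(* [sigma_q B q] and [eps_q B q] are the infima of the [e] such that
   [block_upper (B i) q e], resp. [block_rip (B i) q e], holds for all [i]. *)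
Definition block_rip D m (A : 'M[R]_(D, m)) q e : Prop :=
  exists f : 'I_(\rank A) -> 'I_m, rip_colsub A q f e.

Lemma rip_colsub_up_closed D m r (A : 'M[R]_(D, m)) q (f : 'I_r -> 'I_m) :
  up_closed (rip_colsub A q f).
Proof.
move=> e e' ee' [rk Af]; split=> // cb.
have [lo hi] := Af cb; have N0 := sqr_ge0 (normq q cb); split.
  by apply: le_trans lo; apply: ler_wpM2r; rewrite // lerD2l lerN2.
by apply: le_trans hi _; apply: ler_wpM2r; rewrite // lerD2l.
Qed.

Lemma rip_colsub_right_closed D m r (A : 'M[R]_(D, m)) q (f : 'I_r -> 'I_m) :
  right_closed (rip_colsub A q f).
Proof.
move=> e Af; split=> [|cb]; first by case: (Af (e + 1)); rewrite ?ltrDl.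
have N0 := sqr_ge0 (normq q cb); split.
  suff : normq q cb ^+ 2 <= norm2 (colsub f A *m cb) ^+ 2 + e * normq q cb ^+ 2.
    by lra.
  apply: (right_closed_le_affine N0) => e' ee'.
  by have [+ _] := (Af e' ee').2 cb; lra.
suff : norm2 (colsub f A *m cb) ^+ 2 <= normq q cb ^+ 2 + e * normq q cb ^+ 2.
  by lra.
apply: (right_closed_le_affine N0) => e' ee'.
by have [_ +] := (Af e' ee').2 cb; lra.
Qed.

Lemma block_rip_up_closed D m (A : 'M[R]_(D, m)) q : up_closed (block_rip A q).
Proof. by move=> e e' ee' [f Af]; exists f; exact: rip_colsub_up_closed Af. Qed.

Lemma block_rip_right_closed D m (A : 'M[R]_(D, m)) q :
  right_closed (block_rip A q).
Proof.
have rip_ffun e : block_rip A q e <->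
    exists F : {ffun 'I_(\rank A) -> 'I_m}, rip_colsub A q F e.
  split=> [[f Af]|[F AF]]; last by exists F.
  have ffK : fun_of_fin [ffun j => f j] = f by apply/funext => j; rewrite ffunE.
  by exists [ffun j => f j]; rewrite ffK.
move=> e Ae; apply/rip_ffun.
apply: (right_closed_exists (P := fun F : {ffun _} => rip_colsub A q F)) => [F|F|e' ee'].
- exact: rip_colsub_up_closed.
- exact: rip_colsub_right_closed.
- by apply/rip_ffun; exact: Ae.
Qed.

Lemma block_rip_inSpan D m (A : 'M[R]_(D, m)) q e x :
  0 < q -> block_rip A q e -> inSpan A x ->
  exists ch : 'cV[R]_m, A *m ch = x /\
    (1 - e) * normq q ch ^+ 2 <= norm2 x ^+ 2 /\
    norm2 x ^+ 2 <= (1 + e) * normq q ch ^+ 2.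
Proof.
move=> q0 [f [rk Af]] [c ->]; have [cb ->] := colsub_span c rk.
have f_inj : injective f := colsub_full_rank_inj rk.
by exists (pad_col f cb); rewrite mulmx_pad_col normq_pad_col //; exact: Af.
Qed.

Section Dictionary.
Variables (D n : nat) (m : 'I_n -> nat) (B : forall i : 'I_n, 'M[R]_(D, m i)).
Variable q : R.
Hypothesis q_gt0 : 0 < q.
Hypothesis B_unit : forall (i : 'I_n) (j : 'I_(m i)), \sum_(r < D) B i r j ^+ 2 = 1.
Variables (i0 : 'I_n) (j0 : 'I_(m i0)).

Lemma le_sum_sqr_nat (a : 'I_n -> nat) i : (a i)%:R ^+ 2 <= \sum_(l < n) (a l)%:R ^+ 2 :> R.
Proof. by rewrite (bigD1 i) //= lerDl sumr_ge0 // => l _; exact: sqr_ge0. Qed.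

Lemma sigma_q_spec :
  0 <= sigma_q B q /\ forall i, block_upper (B i) q (sigma_q B q).
Proof.
have S0 : [set s | forall i, block_upper (B i) q s] !=set0.
  exists (\sum_(i < n) (m i)%:R ^+ 2) => i c.
  apply: le_trans (norm2_mulmx_le c q_gt0 (@B_unit i)) _.
  by apply: ler_wpM2r; [exact: sqr_ge0 | rewrite ler_wpDl // le_sum_sqr_nat].
have spec i : block_upper (B i) q (sigma_q B q).
  apply: (inf_closed S0); [by move=> s /(_ i) | exact: block_upper_up_closed |].
  exact: block_upper_right_closed.
split=> //; have := spec i0 (delta_mx j0 0).
by rewrite normq_delta // norm2_col // expr1n mulr1 lerDl.
Qed.

Lemma eps_q_spec :
  0 <= eps_q B q /\ forall i, block_rip (B i) q (eps_q B q).
Proof.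
have colsub_unit i r (f : 'I_r -> 'I_(m i)) j : \sum_(k < D) colsub f (B i) k j ^+ 2 = 1.
  by rewrite -(B_unit (f j)); apply: eq_bigr => k _; rewrite mxE.
have E0 : [set e | forall i, block_rip (B i) q e] !=set0.
  exists (1 + \sum_(i < n) (\rank (B i))%:R ^+ 2) => i.
  have [f rk] := exists_full_rank_colsub (B i); exists f; split=> // cb.
  have X0 := sqr_ge0 (norm2 (colsub f (B i) *m cb)); have N0 := sqr_ge0 (normq q cb).
  have S0 : 0 <= \sum_(i < n) (\rank (B i))%:R ^+ 2 :> R.
    by apply: sumr_ge0 => l _; exact: sqr_ge0.
  split; first by apply: le_trans X0; apply: mulr_le0_ge0 => //; lra.
  apply: le_trans (norm2_mulmx_le cb q_gt0 (colsub_unit i _ f)) _.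
  by apply: ler_wpM2r; rewrite // addrA ler_wpDl ?le_sum_sqr_nat // ler_addr.
have spec i : block_rip (B i) q (eps_q B q).
  apply: (inf_closed E0); [by move=> e /(_ i) | exact: block_rip_up_closed |].
  exact: block_rip_right_closed.
split=> //; have [f [_ Af]] := spec i0.
have rk0 : (0 < \rank (B i0))%N.
  rewrite lt0n mxrank_eq0; apply/eqP => B0; have := B_unit j0.
  by rewrite B0 big1 => [/esym/eqP|r _]; rewrite ?oner_eq0 // mxE expr0n.
have [+ _] := Af (delta_mx (Ordinal rk0) 0).
by rewrite normq_delta // norm2_col // expr1n mulr1; lra.
Qed.

End Dictionary.

End BlockConstants.

Section Estimates.
Variable R : realType.

Lemma norm2_sum_ge (I : finType) D (L : {set I}) (t : I -> 'cV[R]_D)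
    (a : I -> R) (mu eps r : R) :
  0 <= mu ->
  (forall i, i \in L -> (1 - eps) * a i ^+ 2 <= norm2 (t i) ^+ 2) ->
  (forall i, i \in L -> norm2 (t i) <= r * a i) ->
  (forall i j, i \in L -> j \in L -> i != j ->
     `|dot (t i) (t j)| <= mu * norm2 (t i) * norm2 (t j)) ->
  (1 - eps) * (\sum_(i in L) a i ^+ 2)
    - mu * r ^+ 2 * ((\sum_(i in L) a i) ^+ 2 - \sum_(i in L) a i ^+ 2)
  <= norm2 (\sum_(i in L) t i) ^+ 2.
Proof.
move=> mu0 t_ge t_le t_dot.
have cross : (\sum_(i in L) a i) ^+ 2 - \sum_(i in L) a i ^+ 2
    = \sum_(i in L) a i * \sum_(j in L | j != i) a j.
  rewrite expr2 mulr_suml -sumrB; apply: eq_bigr => i iL.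
  by rewrite (bigD1 i) //= mulrDr expr2 addrAC subrr add0r.
rewrite cross mulr_sumr mulr_sumr -sumrB norm2_sqr dot_suml.
apply: ler_sum => i iL; rewrite dot_sumr [X in _ <= X](bigD1 i) //= -norm2_sqr.
rewrite mulr_sumr mulr_sumr -sumrN; apply: lerD; first exact: t_ge.
apply: ler_sum => j /andP[jL ji].
have := t_dot i j iL jL; rewrite eq_sym ji ler_norml => /(_ isT)/andP[dot_ge _].
have : norm2 (t i) * norm2 (t j) <= (r * a i) * (r * a j).
  by apply: ler_pM; rewrite ?norm2_ge0 ?t_le.
move=> /(ler_wpM2l mu0); rewrite -mulrA in dot_ge.
have -> : mu * r ^+ 2 * (a i * a j) = mu * ((r * a i) * (r * a j)) by ring.
lra.
Qed.

Lemma norm2_sum_le (I : finType) D (L : {set I}) (t u : I -> 'cV[R]_D)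
    (al be : I -> R) (mu : R) :
  0 <= mu -> \sum_(i in L) t i = \sum_(j | j \notin L) u j ->
  (forall i, i \in L -> norm2 (t i) <= al i) ->
  (forall j, j \notin L -> norm2 (u j) <= be j) ->
  (forall i j, i \in L -> j \notin L ->
     `|dot (t i) (u j)| <= mu * norm2 (t i) * norm2 (u j)) ->
  norm2 (\sum_(i in L) t i) ^+ 2
    <= mu * (\sum_(i in L) al i) * (\sum_(j | j \notin L) be j).
Proof.
move=> mu0 tu t_le u_le t_dot.
rewrite norm2_sqr {2}tu dot_suml -mulrA mulr_suml mulr_sumr.
apply: ler_sum => i iL; rewrite dot_sumr mulr_sumr mulr_sumr.
apply: ler_sum => j jL; apply: le_trans (ler_norm _) _.
apply: le_trans (t_dot i j iL jL) _; rewrite -mulrA ler_wpM2l //.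
by apply: ler_pM; rewrite ?norm2_ge0 ?t_le ?u_le.
Qed.

Lemma sqr_sum_le_card (I : finType) (L : {set I}) (a : I -> R) :
  (\sum_(i in L) a i) ^+ 2 <= #|L|%:R * \sum_(i in L) a i ^+ 2.
Proof.
have := sqr_sum_mul_le (mem L) a (fun=> 1).
under eq_bigr do rewrite mulr1.
by rewrite [X in _ * X](eq_bigr (fun=> 1)) ?sumr_const 1?mulrC // => i _; rewrite expr1n.
Qed.

Lemma coherence_ratio_le (eps mu r sv kR A Q Bs : R) :
  r ^+ 2 = 1 + eps -> 0 < r -> 0 <= sv -> 0 <= mu -> eps < 1 -> 1 <= kR ->
  0 < Bs -> Bs <= A -> A ^+ 2 <= kR * Q ->
  (1 - eps) * Q - mu * r ^+ 2 * (A ^+ 2 - Q) <= mu * (r * A) * (sv * Bs) ->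
  (1 - eps) / (1 + eps) <= (kR * (sv / r) + kR - 1) * mu.
Proof.
move=> r2 r0 sv0 mu0 eps1 k1 Bs0 BsA AQ gram.
have A0 : 0 < A by apply: lt_le_trans BsA.
have rsvA0 : 0 <= mu * r * sv * A by rewrite !mulr_ge0 // ltW.
have gramA : ((1 - eps) + mu * r ^+ 2) * Q <= (mu * r ^+ 2 + mu * r * sv) * A ^+ 2.
  have : mu * r * sv * A * Bs <= mu * r * sv * A * A by apply: ler_wpM2l.
  rewrite expr2 in gram *; nra.
have c0 : 0 <= (1 - eps) + mu * r ^+ 2 by rewrite addr_ge0 ?mulr_ge0 ?sqr_ge0 //; lra.
have : ((1 - eps) + mu * r ^+ 2) * A ^+ 2
    <= kR * (mu * r ^+ 2 + mu * r * sv) * A ^+ 2.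
  have := ler_wpM2l c0 AQ; have := ler_wpM2l (le_trans ler01 k1) gramA.
  nra.
rewrite ler_pM2r ?exprn_gt0 // -r2 ler_pdivrMr ?exprn_gt0 //.
have -> : (kR * (sv / r) + kR - 1) * mu * r ^+ 2
    = kR * mu * r * sv + (kR - 1) * mu * r ^+ 2.
  by field; exact: lt0r_neq0.
lra.
Qed.

End Estimates.

Section Recovery.
Variables (R : realType) (D n : nat) (m : 'I_n -> nat).
Variables (B : forall i : 'I_n, 'M[R]_(D, m i)) (q : R).
Hypothesis q_ge1 : 1 <= q.

Let q_gt0 : 0 < q. Proof. exact: lt_le_trans q_ge1. Qed.

(* Replacing [c] off [L] by [ch] on [L] gives a feasible point, so optimality and
   the triangle inequality bound the off-support mass of [c]. *)
Lemma lq_l1_optimal_offsupport y c (L : {set 'I_n}) (ch : forall i, 'cV[R]_(m i)) :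
  lq_l1_optimal B q y c ->
  \sum_(i in L) B i *m ch i = \sum_(j | j \notin L) B j *m c j ->
  \sum_(j | j \notin L) normq q (c j) <= \sum_(i in L) normq q (ch i).
Proof.
move=> [yc c_opt] move_mass.
pose c' i : 'cV[R]_(m i) := if i \in L then c i + ch i else 0.
have yc' : y = Bmul B c'.
  rewrite yc /Bmul (bigID (fun i => i \in L)) [RHS](bigID (fun i => i \in L)) /=.
  rewrite -move_mass -big_split /= [X in _ = _ + X]big1 => [|i /negbTE iL].
    by rewrite addr0; apply: eq_bigr => i iL; rewrite /c' iL mulmxDr.
  by rewrite /c' iL mulmx0.
have c'_in : \sum_(i in L) normq q (c' i)
    <= \sum_(i in L) normq q (c i) + \sum_(i in L) normq q (ch i).
  by rewrite -big_split; apply: ler_sum => i iL; rewrite /c' iL normqD.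
have c'_out : \sum_(i | i \notin L) normq q (c' i) = 0.
  by apply: big1 => i /negbTE iL; rewrite /c' iL normq0.
move: (c_opt _ yc') c'_in c'_out; clearbody c'.
(* Abstracting [normq] keeps unification from unfolding it when [lra] compares
   the sums. *)
move: (@Defs.normq R) => N.
by rewrite !(bigID (fun i => i \in L) xpredT) /=; lra.
Qed.

Lemma offsupport_in_block_sum (L : {set 'I_n}) y c :
  in_block_sum B L y -> y = Bmul B c ->
  exists t : 'I_n -> 'cV[R]_D, (forall i, i \in L -> inSpan (B i) (t i)) /\
    \sum_(i in L) t i = \sum_(j | j \notin L) B j *m c j.
Proof.
move=> [s [s_in ys]] yc; exists (fun i => s i - B i *m c i); split.
  by move=> i iL; have [x sx] := s_in i iL; exists (x - c i); rewrite mulmxBr -sx.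
rewrite sumrB -ys yc /Bmul (bigID (fun i => i \in L)) /=.
by rewrite addrAC subrr add0r.
Qed.

Lemma exists_block_coords eps (L : {set 'I_n}) (t : 'I_n -> 'cV[R]_D) :
  (forall i, block_rip (B i) q eps) -> (forall i, i \in L -> inSpan (B i) (t i)) ->
  exists ch : forall i, 'cV[R]_(m i), forall i, i \in L ->
    [/\ B i *m ch i = t i, (1 - eps) * normq q (ch i) ^+ 2 <= norm2 (t i) ^+ 2
      & norm2 (t i) ^+ 2 <= (1 + eps) * normq q (ch i) ^+ 2].
Proof.
move=> rip t_in.
have coords i : exists ch : 'cV[R]_(m i), i \in L ->
    [/\ B i *m ch = t i, (1 - eps) * normq q ch ^+ 2 <= norm2 (t i) ^+ 2
      & norm2 (t i) ^+ 2 <= (1 + eps) * normq q ch ^+ 2].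
  have [iL|_] := boolP (i \in L); last by exists 0.
  have [ch [chB [lo hi]]] := block_rip_inSpan q_gt0 (rip i) (t_in i iL).
  by exists ch.
by exists (fun i => sval (cid (coords i))) => i; exact: svalP (cid (coords i)).
Qed.

Lemma le_sqrtr_mul (x b e : R) : 0 <= e -> 0 <= b -> x ^+ 2 <= e * b ^+ 2 ->
  x <= Num.sqrt e * b.
Proof.
move=> e0 b0 xb; apply: le_trans (ler_norm x) _.
rewrite -sqrtr_sqr -[b in _ * b](ger0_norm b0) -sqrtr_sqr -sqrtrM //.
by rewrite ler_sqrt // mulr_ge0 ?sqr_ge0.
Qed.

Lemma nonrecovery_coherence_ge (eps sig : R) (k : nat) (L : {set 'I_n}) y c
    (i0 : 'I_n) :
  0 <= eps -> 0 <= sig ->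
  (forall i, block_rip (B i) q eps) -> (forall i, block_upper (B i) q sig) ->
  (0 < k)%N -> #|L| = k -> in_block_sum B L y -> lq_l1_optimal B q y c ->
  i0 \notin L -> c i0 != 0 ->
  (1 - eps) / (1 + eps)
    <= (k%:R * Num.sqrt ((1 + sig) / (1 + eps)) + k%:R - 1) * mu_S B.
Proof.
move=> eps0 sig0 rip upper k0 cardL yL c_opt i0L ci0.
have mu0 : 0 <= mu_S B by exact: bigmax_ge_id.
have k1 : 1 <= k%:R :> R by rewrite ler1n.
have [eps_ge1|eps1] := leP 1 eps.
  apply: (@le_trans _ _ 0); first by rewrite mulr_le0_ge0 ?invr_ge0; lra.
  by rewrite mulr_ge0 // -addrA addr_ge0 ?mulr_ge0 ?sqrtr_ge0 ?subr_ge0.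
have [t [t_in residual]] := offsupport_in_block_sum yL c_opt.1.
have [ch ch_spec] := exists_block_coords rip t_in.
pose r := Num.sqrt (1 + eps); pose sv := Num.sqrt (1 + sig).
have r2 : r ^+ 2 = 1 + eps by rewrite sqr_sqrtr //; lra.
have r0 : 0 < r by rewrite sqrtr_gt0; lra.
have t_le i : i \in L -> norm2 (t i) <= r * normq q (ch i).
  move=> iL; have [_ _ hi] := ch_spec i iL.
  by apply: le_sqrtr_mul; rewrite ?normq_ge0 //; lra.
have Bc_le j : j \notin L -> norm2 (B j *m c j) <= sv * normq q (c j).
  by move=> _; apply: le_sqrtr_mul; rewrite ?normq_ge0 ?upper //; lra.
have lower := norm2_sum_ge (a := fun i => normq q (ch i)) (eps := eps) mu0
  (fun i iL => let: And3 _ lo _ := ch_spec i iL in lo) t_le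
  (fun i j iL jL ij => dot_le_mu_S ij (t_in i iL) (t_in j jL)).
have upper_sum : norm2 (\sum_(i in L) t i) ^+ 2 <= mu_S B
    * (\sum_(i in L) r * normq q (ch i)) * (\sum_(j | j \notin L) sv * normq q (c j)).
  apply: norm2_sum_le mu0 residual t_le Bc_le _ => i j iL jL.
  apply: dot_le_mu_S (t_in i iL) (ex_intro _ (c j) erefl).
  by apply: contraNneq jL => <-.
have BsA : \sum_(j | j \notin L) normq q (c j) <= \sum_(i in L) normq q (ch i).
  apply: lq_l1_optimal_offsupport c_opt _; rewrite -residual.
  by apply: eq_bigr => i iL; have [] := ch_spec i iL.
have Bs0 : 0 < \sum_(j | j \notin L) normq q (c j).
  apply: lt_le_trans (normq_gt0 q_gt0 ci0) _.
  by rewrite (bigD1 i0) //= lerDl sumr_ge0 // => j _; exact: normq_ge0.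
have cs := sqr_sum_le_card L (fun i => normq q (ch i)); rewrite cardL in cs.
have gram : (1 - eps) * \sum_(i in L) normq q (ch i) ^+ 2 - mu_S B * r ^+ 2
    * ((\sum_(i in L) normq q (ch i)) ^+ 2 - \sum_(i in L) normq q (ch i) ^+ 2)
    <= mu_S B * (r * \sum_(i in L) normq q (ch i))
         * (sv * \sum_(j | j \notin L) normq q (c j)).
  by rewrite [r * _]mulr_sumr [sv * _]mulr_sumr; exact: le_trans lower upper_sum.
rewrite sqrtrM ?addr_ge0 // sqrtrV ?addr_ge0 // -/sv -/r.
exact: coherence_ratio_le r2 r0 (sqrtr_ge0 _) mu0 eps1 k1 Bs0 BsA cs gram.
Qed.

End Recovery.

Theorem corollary2 (R : realType) (D n : nat) (m : 'I_n -> nat)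
    (B : forall i : 'I_n, 'M[R]_(D, m i)) (q : R) (k : nat) :
  1 <= q -> (0 < k)%N -> (k < n)%N ->
  (forall (i : 'I_n) (j : 'I_(m i)), \sum_(r < D) B i r j ^+ 2 = 1) ->
  (forall i j : 'I_n, i != j ->
     forall x : 'cV[R]_D, inSpan (B i) x -> inSpan (B j) x -> x = 0) ->
  unique_kbs B k ->
  (k%:R * Num.sqrt ((1 + sigma_q B q) / (1 + eps_q B q)) + k%:R - 1) * mu_S B
    < (1 - eps_q B q) / (1 + eps_q B q) ->
  forall L : {set 'I_n}, #|L| = k ->
  forall y : 'cV[R]_D, in_block_sum B L y ->
  forall c : forall i : 'I_n, 'cV[R]_(m i), lq_l1_optimal B q y c ->
  forall i : 'I_n, i \notin L -> c i = 0.
Proof.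
move=> q_ge1 k_gt0 _ B_unit _ _ cond L cardL y yL c c_opt i iL.
have [//|ci] := eqVneq (c i) 0; exfalso.
have q_gt0 : 0 < q by apply: lt_le_trans q_ge1.
have /existsP[j _] : [exists j, c i j 0 != 0].
  apply: contraR ci => /existsPn c0; apply/eqP/matrixP => j l.
  by rewrite ord1 mxE; apply/eqP/negPn/c0.
have [sig0 upper] := sigma_q_spec q_gt0 B_unit j.
have [eps0 rip] := eps_q_spec q_gt0 B_unit j.
have := nonrecovery_coherence_ge q_ge1 eps0 sig0 rip upper k_gt0 cardL yL c_opt iL ci.
by move/(lt_le_trans cond); rewrite ltxx.
Qed.
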